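(* Let $\mathcal R$ be a semi-finite CCTRS and $s\in\mathcal T(\mathcal F,\mathcal V)$. Then $s$ is not quasi-decreasing if and only if $\mathrm{label}(s)\rightharpoonup^\infty$.
   Context: Terms are built from a signature $\mathcal F$ and variables $\mathcal V$. An (oriented) conditional rewrite rule has the form $\ell\to r\Leftarrow a_1\approx b_1,\dots,a_k\approx b_k$ with $k\ge0$; $s\to_{\mathcal R}t$ iff there are a position $p$, a rule and a substitution $\sigma$ with $s|_p=\ell\sigma$, $t=s[r\sigma]_p$ and $a_j\sigma\to_{\mathcal R}^*b_j\sigma$ for all $j$ (formally the union of the usual approximations $\to_{\mathcal R_i}$). Defined symbols are root symbols of left-hand sides, others are constructors; constructor terms contain only constructors and variables. $\mathcal R{\restriction}f$ is the set of rules whose left-hand side has root $f$; $\mathcal R$ is semi-finite if each $\mathcal R{\restriction}f$ is finite. A CCTRS is a set $\mathcal R$ of rules each of the form $f(\ell_1,\dots,\ell_n)\to r\Leftarrow a_1\approx b_1,\dots,a_k\approx b_k$ where $\ell_1,\dots,\ell_n,b_1,\dots,b_k$ are constructor terms, the terms $f(\ell_1,\dots,\ell_n),b_1,\dots,b_k$ pairwise have no common variables, $\mathrm{Var}(r)\subseteq\mathrm{Var}(\ell_1,\dots,\ell_n,b_1,\dots,b_k)$ and $\mathrm{Var}(a_i)\subseteq\mathrm{Var}(\ell_1,\dots,\ell_n,b_1,\dots,b_{i-1})$. Write $s\sqsupset t$ if there are a position $p$, a rule $\ell\to r\Leftarrow a_1\approx b_1,\dots,a_k\approx b_k$, a substitution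 $\sigma$ and $1\le i\le k$ with $s|_p=\ell\sigma$, $a_j\sigma\to^* b_j\sigma$ for $1\le j<i$, and $t=a_i\sigma$. A term $s$ is quasi-decreasing if there is no infinite sequence $s=u_0\,(\to\cup\sqsupset)\,u_1\,(\to\cup\sqsupset)\cdots$. Labeled terms: the labeled signature $\mathcal G$ consists of the constructors of $\mathcal F$ together with a symbol $f_R$ (same arity as $f$) for every defined $f$ and every $R\subseteq\mathcal R{\restriction}f$. $\mathrm{label}(t)$ replaces every defined $f$ by $f_{\mathcal R\restriction f}$; $\mathrm{erase}$ removes all labels. A labeled normal form is a term built only from constructors, symbols $f_\emptyset$, and variables. The labeled step relation $\rightharpoonup$ is defined inductively: $s\rightharpoonup t$ if either (i) there are a position $p$ and a rule $\rho\colon\ell\to r\Leftarrow c$ with $s|_p=f_R(s_1,\dots,s_n)$, $\rho\in R$, $t=s[f_{R\setminus\{\rho\}}(s_1,\dots,s_n)]_p$, and linear labeled normal forms $u_1,\dots,u_n$ on fresh variables and $\sigma$ with $s|_p=f_R(u_1,\dots,u_n)\sigma$ and $f(\mathrm{erase}(u_1),\dots,\mathrm{erase}(u_n))$ not unifiable with $\ell$; or (ii) there are $p$, a rule $\rho\colon f(\ell_1,\dots,\ell_n)\to r\Leftarrow a_1\approx b_1,\dots,a_k\approx b_k$, $\sigma$ and $0\le j\le k$ with $s|_p=f_R(\ell_1\sigma,\dots,\ell_n\sigma)$, $\rho\in R$, $\mathrm{label}(a_i)\sigma\rightharpoonup^*b_i\sigma$ for $1\le i\le j$, and either $j=k$ and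 $t=s[\mathrm{label}(r)\sigma]_p$, or $j<k$, $\mathrm{label}(a_{j+1})\sigma\rightharpoonup^*u\tau$ for some linear labeled normal form $u$ with $\mathrm{erase}(u)$ not unifiable with $b_{j+1}$ and some $\tau$, and $t=s[f_{R\setminus\{\rho\}}(\ell_1\sigma,\dots,\ell_n\sigma)]_p$. Further $s\rightharpoonup_\rhd t$ if there are a position $p$, a rule $\rho$ as in (ii), $\sigma$ and $0\le j<k$ with $s|_p=f_R(\ell_1\sigma,\dots,\ell_n\sigma)$, $\rho\in R$, $\mathrm{label}(a_i)\sigma\rightharpoonup^*b_i\sigma$ for $1\le i\le j$, and $t=\mathrm{label}(a_{j+1})\sigma$. $s\rightharpoonup^\infty$ means there is an infinite sequence $s=s_0\,(\rightharpoonup\cup\rightharpoonup_\rhd)\,s_1\,(\rightharpoonup\cup\rightharpoonup_\rhd)\cdots$. *)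

From Stdlib Require Import List Relations ClassicalEpsilon.
Import ListNotations.

Set Implicit Arguments.

Inductive term (S V : Type) : Type :=
| Var : V -> term S V
| Fun : S -> list (term S V) -> term S V.
Arguments Var {S V} _.
Arguments Fun {S V} _ _.

Fixpoint subst {S V : Type} (sigma : V -> term S V) (t : term S V) : term S V :=
  match t with
  | Var x => sigma x
  | Fun f ts => Fun f (map (subst sigma) ts)
  end.

Fixpoint vars {S V : Type} (t : term S V) : list V :=
  match t with
  | Var x => [x]
  | Fun _ ts => flat_map vars ts
  end.

Fixpoint all_syms {S V : Type} (P : S -> Prop) (t : term S V) : Prop :=
  match t with
  | Var _ => True
  | Fun f ts => P f /\
      (fix go (l : list (term S V)) : Prop :=
         match l with [] => True | u :: l' => all_syms P u /\ go l' end) ts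
  end.

(* well-formedness w.r.t. an arity function: t is in T(S, V) *)
Fixpoint wf {S V : Type} (ar : S -> nat) (t : term S V) : Prop :=
  match t with
  | Var _ => True
  | Fun f ts => length ts = ar f /\
      (fix go (l : list (term S V)) : Prop :=
         match l with [] => True | u :: l' => wf ar u /\ go l' end) ts
  end.

Definition root {S V : Type} (t : term S V) : option S :=
  match t with Var _ => None | Fun f _ => Some f end.

(* one-hole contexts; C[t] = plug C t  (equivalent to positions p with s|_p) *)
Inductive ctx (S V : Type) : Type :=
| Hole : ctx S V
| CFun : S -> list (term S V) -> ctx S V -> list (term S V) -> ctx S V.
Arguments Hole {S V}.
Arguments CFun {S V} _ _ _ _.

Fixpoint plug {S V : Type} (C : ctx S V) (t : term S V) : term S V :=
  match C with
  | Hole => t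
  | CFun f l C' r => Fun f (l ++ plug C' t :: r)
  end.

Definition unifiable {S V : Type} (t1 t2 : term S V) : Prop :=
  exists sigma : V -> term S V, subst sigma t1 = subst sigma t2.

Definition disjoint {A : Type} (l1 l2 : list A) : Prop :=
  forall x, In x l1 -> In x l2 -> False.

Record rule (F V : Type) : Type := mkRule {
  lhs : term F V;
  rhs : term F V;
  conds : list (term F V * term F V)
}.
Arguments mkRule {F V} _ _ _.
Arguments lhs {F V} _.
Arguments rhs {F V} _.
Arguments conds {F V} _.

Definition rule_vars {F V : Type} (rho : rule F V) : list V :=
  vars (lhs rho) ++ vars (rhs rho)
  ++ flat_map (fun c => vars (fst c) ++ vars (snd c)) (conds rho).

Section CTRS.
Variables F V : Type.
(* a (possibly infinite) CTRS is a set of rules *)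
Variable R : rule F V -> Prop.

Definition trs_wf (ar : F -> nat) : Prop :=
  forall rho, R rho ->
    wf ar (lhs rho) /\ wf ar (rhs rho) /\
    Forall (fun c => wf ar (fst c) /\ wf ar (snd c)) (conds rho).

Definition defined (f : F) : Prop :=
  exists rho, R rho /\ root (lhs rho) = Some f.

Definition constructor (f : F) : Prop := ~ defined f.

Definition constructor_term (t : term F V) : Prop := all_syms constructor t.

Definition restrict (f : F) : rule F V -> Prop :=
  fun rho => R rho /\ root (lhs rho) = Some f.

Definition semi_finite : Prop :=
  forall f, exists l : list (rule F V), forall rho, restrict f rho <-> In rho l.

Definition CCTRS : Prop :=
  forall rho, R rho ->
    exists f ls, lhs rho = Fun f ls /\
      Forall constructor_term ls /\
      Forall (fun c => constructor_term (snd c)) (conds rho) /\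
      (forall i a b, nth_error (conds rho) i = Some (a, b) ->
         disjoint (vars (lhs rho)) (vars b)) /\
      (forall i j a b a' b', i <> j ->
         nth_error (conds rho) i = Some (a, b) ->
         nth_error (conds rho) j = Some (a', b') ->
         disjoint (vars b) (vars b')) /\
      (forall x, In x (vars (rhs rho)) ->
         In x (vars (lhs rho) ++ flat_map (fun c => vars (snd c)) (conds rho))) /\
      (forall i a b, nth_error (conds rho) i = Some (a, b) ->
         forall x, In x (vars a) ->
           In x (vars (lhs rho) ++
                 flat_map (fun c => vars (snd c)) (firstn i (conds rho)))).

Fixpoint approx (n : nat) : relation (term F V) :=
  match n with
  | O => fun _ _ => False
  | S m => fun s t =>
      exists (C : ctx F V) (rho : rule F V) (sigma : V -> term F V),
        R rho /\
        s = plug C (subst sigma (lhs rho)) /\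
        t = plug C (subst sigma (rhs rho)) /\
        Forall (fun c => clos_refl_trans _ (approx m)
                           (subst sigma (fst c)) (subst sigma (snd c)))
               (conds rho)
  end.

Definition rew (s t : term F V) : Prop := exists n, approx n s t.

Definition rews : relation (term F V) := clos_refl_trans _ rew.

Definition sqsupset (s t : term F V) : Prop :=
  exists (C : ctx F V) (rho : rule F V) (sigma : V -> term F V) i a b,
    R rho /\
    s = plug C (subst sigma (lhs rho)) /\
    nth_error (conds rho) i = Some (a, b) /\
    (forall j a' b', j < i -> nth_error (conds rho) j = Some (a', b') ->
       rews (subst sigma a') (subst sigma b')) /\
    t = subst sigma a.

Definition quasi_decreasing (s : term F V) : Prop :=
  ~ exists u : nat -> term F V,
      u 0 = s /\ forall n, rew (u n) (u (S n)) \/ sqsupset (u n) (u (S n)).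

(* LCon c : a constructor c;  LDef f L : the labeled symbol f_L, L a set of rules *)
Inductive lsym : Type :=
| LCon : F -> lsym
| LDef : F -> (rule F V -> Prop) -> lsym.

Definition lterm := term lsym V.

Definition label_sym (f : F) : lsym :=
  if excluded_middle_informative (defined f)
  then LDef f (restrict f) else LCon f.

Fixpoint label (t : term F V) : lterm :=
  match t with
  | Var x => Var x
  | Fun f ts => Fun (label_sym f) (map label ts)
  end.

Definition erase_sym (g : lsym) : F :=
  match g with LCon c => c | LDef f _ => f end.

Fixpoint erase (t : lterm) : term F V :=
  match t with
  | Var x => Var x
  | Fun g ts => Fun (erase_sym g) (map erase ts)
  end.

Definition lnf_sym (g : lsym) : Prop :=
  match g with
  | LCon c => constructor c
  | LDef f L => defined f /\ forall rho, ~ L rho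
  end.

Definition lnf (t : lterm) : Prop := all_syms lnf_sym t.

Definition remove_rule (L : rule F V -> Prop) (rho : rule F V) : rule F V -> Prop :=
  fun r => L r /\ r <> rho.

Inductive lstep : lterm -> lterm -> Prop :=
| lstep_i : forall (C : ctx lsym V) f L ss rho (us : list lterm) (sigma : V -> lterm),
    L rho ->
    Forall lnf us ->
    NoDup (flat_map vars us) ->
    disjoint (flat_map vars us) (rule_vars rho) ->
    ss = map (subst sigma) us ->
    ~ unifiable (Fun f (map erase us)) (lhs rho) ->
    lstep (plug C (Fun (LDef f L) ss))
          (plug C (Fun (LDef f (remove_rule L rho)) ss))
| lstep_ii_rhs : forall (C : ctx lsym V) f L ls rho (sigma : V -> lterm),
    lhs rho = Fun f ls ->
    L rho ->
    (forall i a b, nth_error (conds rho) i = Some (a, b) ->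
       clos_refl_trans _ lstep (subst sigma (label a)) (subst sigma (label b))) ->
    lstep (plug C (Fun (LDef f L) (map (fun l => subst sigma (label l)) ls)))
          (plug C (subst sigma (label (rhs rho))))
| lstep_ii_fail : forall (C : ctx lsym V) f L ls rho (sigma : V -> lterm) j aj bj
    (u : lterm) (tau : V -> lterm),
    lhs rho = Fun f ls ->
    L rho ->
    nth_error (conds rho) j = Some (aj, bj) ->
    (forall i a b, i < j -> nth_error (conds rho) i = Some (a, b) ->
       clos_refl_trans _ lstep (subst sigma (label a)) (subst sigma (label b))) ->
    lnf u ->
    NoDup (vars u) ->
    disjoint (vars u) (rule_vars rho) ->
    clos_refl_trans _ lstep (subst sigma (label aj)) (subst tau u) ->
    ~ unifiable (erase u) bj ->
    lstep (plug C (Fun (LDef f L) (map (fun l => subst sigma (label l)) ls)))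
          (plug C (Fun (LDef f (remove_rule L rho))
                       (map (fun l => subst sigma (label l)) ls))).

Definition lsteps : relation lterm := clos_refl_trans _ lstep.

Definition lstep_sub (s t : lterm) : Prop :=
  exists (C : ctx lsym V) f L ls rho (sigma : V -> lterm) j aj bj,
    lhs rho = Fun f ls /\
    L rho /\
    s = plug C (Fun (LDef f L) (map (fun l => subst sigma (label l)) ls)) /\
    nth_error (conds rho) j = Some (aj, bj) /\
    (forall i a b, i < j -> nth_error (conds rho) i = Some (a, b) ->
       lsteps (subst sigma (label a)) (subst sigma (label b))) /\
    t = subst sigma (label aj).

Definition linf (s : lterm) : Prop :=
  exists u : nat -> lterm,
    u 0 = s /\ forall n, lstep (u n) (u (S n)) \/ lstep_sub (u n) (u (S n)).

End CTRS.

(* Labeling a rewrite step f(l)σ -> rσ yields a labeled step of kind (ii) with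
   all conditions satisfied, and labeling a ⊐-step yields a ⇀_▷-step, so an
   infinite →/⊐ sequence from s labels to an infinite ⇀/⇀_▷ sequence.
   Conversely, along a labeled sequence starting at label(s) every symbol f_L
   keeps L ⊆ R|f.  Erasing labels then maps a successful (ii)-step to a
   rewrite step and a ⇀_▷-step to a ⊐-step, whereas a (i)-step or a failing
   (ii)-step leaves the erased term unchanged and deletes a rule from a label.
   By semi-finiteness the number of rules left in the labels of a term is a
   natural number, which such invisible steps strictly decrease; hence an
   infinite labeled sequence contains infinitely many visible steps, and
   erasing it gives an infinite →/⊐ sequence from s. *)
From Stdlib Require Import List Relations Classical ClassicalEpsilon Lia Arith.
Import ListNotations.
Set Implicit Arguments.

Lemma clos_rt_map (A B : Type) (R1 : relation A) (R2 : relation B) (f : A -> B) :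
  (forall x y, R1 x y -> R2 (f x) (f y)) ->
  forall x y, clos_refl_trans _ R1 x y -> clos_refl_trans _ R2 (f x) (f y).
Proof.
  intros Hf x y H.
  induction H; [apply rt_step, Hf; auto | apply rt_refl | eapply rt_trans; eauto].
Qed.

Lemma stuttering_chain (A B : Type) (P : relation B) (f : A -> B)
    (mu : A -> nat) (u : nat -> A) :
  (forall n, P (f (u n)) (f (u (S n))) \/
             (f (u (S n)) = f (u n) /\ mu (u (S n)) < mu (u n))) ->
  exists w : nat -> B, w 0 = f (u 0) /\ forall k, P (w k) (w (S k)).
Proof.
  intros Hu.
  assert (Hvisible : forall n, exists m, P (f (u m)) (f (u (S m))) /\ f (u m) = f (u n)).
  { intros n. remember (mu (u n)) as k eqn:Hk. revert n Hk.
    induction k as [k IH] using (well_founded_induction lt_wf). intros n Hk.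
    destruct (Hu n) as [HP | [He Hlt]]; [exists n; auto|].
    destruct (IH (mu (u (S n))) ltac:(lia) (S n) eq_refl) as [m [HPm Hem]].
    exists m. split; [exact HPm | congruence]. }
  set (next n := proj1_sig (constructive_indefinite_description _ (Hvisible n))).
  assert (Hnext : forall n, P (f (u (next n))) (f (u (S (next n)))) /\
                            f (u (next n)) = f (u n)).
  { intros n. unfold next. destruct constructive_indefinite_description. auto. }
  set (g := fix g k := match k with 0 => 0 | S k => S (next (g k)) end).
  exists (fun k => f (u (g k))). split; [reflexivity|].
  intros k. simpl. destruct (Hnext (g k)) as [HP He]. rewrite <- He. exact HP.
Qed.

Definition holdsb (A : Type) (P : A -> Prop) (x : A) : bool :=
  if excluded_middle_informative (P x) then true else false.

Definition count_holds (A : Type) (P : A -> Prop) (l : list A) : nat :=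
  length (filter (holdsb P) l).

Lemma count_holds_mono (A : Type) (P Q : A -> Prop) (l : list A) :
  (forall x, Q x -> P x) -> count_holds Q l <= count_holds P l.
Proof.
  intros H. unfold count_holds, holdsb. induction l as [|a l IH]; simpl; auto.
  do 2 destruct excluded_middle_informative; simpl; try lia. exfalso; auto.
Qed.

Lemma count_holds_strict_mono (A : Type) (P Q : A -> Prop) (l : list A) x :
  (forall y, Q y -> P y) -> In x l -> P x -> ~ Q x ->
  count_holds Q l < count_holds P l.
Proof.
  intros H Hx Px Qx. induction l as [|a l IH]; [destruct Hx|].
  pose proof (@count_holds_mono A P Q l H).
  unfold count_holds, holdsb in *. simpl.
  destruct Hx as [<- | Hx].
  - do 2 destruct excluded_middle_informative; simpl; tauto || lia.
  - specialize (IH Hx).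
    do 2 destruct excluded_middle_informative; simpl; try lia. exfalso; auto.
Qed.

Lemma In_firstn_nth_error (A : Type) (l : list A) i c : In c (firstn i l) ->
  exists j, j < i /\ nth_error l j = Some c.
Proof.
  revert i; induction l as [|a l IH]; intros [|i] H; simpl in *; try tauto.
  destruct H as [<-|H]; [exists 0; split; auto; lia|].
  destruct (IH _ H) as [j [? ?]]. exists (S j); split; auto; lia.
Qed.

Section Terms.
Variables S V : Type.

Definition term_nested_ind (P : term S V -> Prop) (Hv : forall x, P (Var x))
  (Hf : forall f ts, Forall P ts -> P (Fun f ts)) : forall t, P t :=
  fix IH t := match t with
  | Var x => Hv x
  | Fun f ts => Hf f ts ((fix go l : Forall P l := match l with
        | [] => Forall_nil _
        | u :: l' => Forall_cons u (IH u) (go l') end) ts)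
  end.

Lemma all_syms_Fun (P : S -> Prop) f ts :
  all_syms P (Fun f ts) <-> P f /\ Forall (all_syms (V:=V) P) ts.
Proof.
  simpl. split; intros [H1 H2]; split; auto; clear H1;
    induction ts; simpl in *; auto.
  - destruct H2; constructor; auto.
  - inversion H2; subst; split; [|apply IHts]; auto.
Qed.

Lemma all_syms_subst (P : S -> Prop) (sigma : V -> term S V) t :
  all_syms P (subst sigma t) <->
  all_syms P t /\ (forall x, In x (vars t) -> all_syms P (sigma x)).
Proof.
  induction t as [x|f ts IH] using term_nested_ind.
  - simpl. split; [intros H; split; auto; intros y [<-|[]]; auto | intros [_ H]; auto].
  - simpl subst. rewrite !all_syms_Fun, Forall_map. rewrite Forall_forall in IH.
    simpl vars. split.
    + intros [Hf Hts]. rewrite Forall_forall in Hts. split; [split; auto|].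
      * rewrite Forall_forall; intros u Hu; apply (IH u Hu), Hts, Hu.
      * intros x Hx. apply in_flat_map in Hx as [u [Hu Hx]].
        apply (IH u Hu); auto.
    + intros [[Hf Hts] Hx]. rewrite Forall_forall in Hts. split; auto.
      rewrite Forall_forall; intros u Hu. apply (IH u Hu); split; auto.
      intros x Hxu; apply Hx, in_flat_map; eauto.
Qed.

Lemma all_syms_plug_inv (P : S -> Prop) (C : ctx S V) t :
  all_syms P (plug C t) -> all_syms P t.
Proof.
  induction C; simpl plug; auto.
  rewrite all_syms_Fun, Forall_app. intros [_ [_ H]]. inversion H; auto.
Qed.

Lemma all_syms_plug_replace (P : S -> Prop) (C : ctx S V) t t' :
  (all_syms P t -> all_syms P t') -> all_syms P (plug C t) -> all_syms P (plug C t').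
Proof.
  intros Ht. induction C; simpl plug; auto.
  rewrite !all_syms_Fun, !Forall_app. intros [H0 [H1 H2]]. inversion H2; subst.
  repeat split; auto.
Qed.

End Terms.

Section Labeling.
Variables F V : Type.
Variable R : rule F V -> Prop.

Lemma label_sym_defined f : defined R f -> label_sym R f = LDef f (restrict R f).
Proof. intros H. unfold label_sym. destruct excluded_middle_informative; tauto. Qed.

Lemma erase_sym_label f : erase_sym (label_sym R f) = f.
Proof. unfold label_sym. destruct excluded_middle_informative; reflexivity. Qed.

Lemma label_subst (sigma : V -> term F V) t :
  label R (subst sigma t) = subst (fun x => label R (sigma x)) (label R t).
Proof.
  induction t as [x|f ts IH] using term_nested_ind; simpl; auto.
  f_equal. rewrite !map_map. apply map_ext_in. rewrite Forall_forall in IH. auto.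
Qed.

Lemma erase_subst (sigma : V -> lterm F V) t :
  erase (subst sigma t) = subst (fun x => erase (sigma x)) (erase t).
Proof.
  induction t as [x|f ts IH] using term_nested_ind; simpl; auto.
  f_equal. rewrite !map_map. apply map_ext_in. rewrite Forall_forall in IH. auto.
Qed.

Lemma erase_label t : erase (label R t) = t.
Proof.
  induction t as [x|f ts IH] using term_nested_ind; simpl; auto.
  rewrite erase_sym_label, map_map. f_equal. rewrite Forall_forall in IH.
  rewrite <- (map_id ts) at 2. apply map_ext_in. auto.
Qed.

Lemma erase_subst_label (sigma : V -> lterm F V) t :
  erase (subst sigma (label R t)) = subst (fun x => erase (sigma x)) t.
Proof. rewrite erase_subst, erase_label. reflexivity. Qed.

Lemma vars_label t : vars (label R t) = vars t.
Proof.
  induction t as [x|f ts IH] using term_nested_ind; simpl; auto.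
  induction ts; simpl; auto. inversion IH; subst. rewrite H1, IHts; auto.
Qed.

Fixpoint label_ctx (C : ctx F V) : ctx (lsym F V) V :=
  match C with
  | Hole => Hole
  | CFun f l C' r =>
      CFun (label_sym R f) (map (label R) l) (label_ctx C') (map (label R) r)
  end.

Lemma label_plug C t : label R (plug C t) = plug (label_ctx C) (label R t).
Proof. induction C; simpl; auto. rewrite map_app. simpl. rewrite IHC. reflexivity. Qed.

Fixpoint erase_ctx (C : ctx (lsym F V) V) : ctx F V :=
  match C with
  | Hole => Hole
  | CFun f l C' r =>
      CFun (erase_sym f) (map (@erase F V) l) (erase_ctx C') (map (@erase F V) r)
  end.

Lemma erase_plug C t : erase (plug C t) = plug (erase_ctx C) (erase t).
Proof. induction C; simpl; auto. rewrite map_app. simpl. rewrite IHC. reflexivity. Qed.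

Lemma erase_redex f L ls (sigma : V -> lterm F V) :
  erase (Fun (LDef f L) (map (fun l => subst sigma (label R l)) ls)) =
  subst (fun x => erase (sigma x)) (Fun f ls).
Proof.
  simpl. f_equal. rewrite map_map. apply map_ext. intros; apply erase_subst_label.
Qed.

End Labeling.

Section Approximations.
Variables F V : Type.
Variable R : rule F V -> Prop.

Lemma approx_S n : forall s t, approx R n s t -> approx R (S n) s t.
Proof.
  induction n as [|n IH]; simpl; [tauto|].
  intros s t (C & rho & sigma & HR & -> & -> & Hc). exists C, rho, sigma.
  repeat split; auto. revert Hc. apply Forall_impl. intros c.
  apply (clos_rt_map _ (fun x => x) IH).
Qed.

Lemma approx_rt_mono n m s t : n <= m ->
  clos_refl_trans _ (approx R n) s t -> clos_refl_trans _ (approx R m) s t.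
Proof.
  intros Hnm. apply (clos_rt_map _ (fun x => x)).
  induction Hnm; auto using approx_S.
Qed.

Lemma rews_approx s t : rews R s t -> exists n, clos_refl_trans _ (approx R n) s t.
Proof.
  induction 1 as [x y [n H]| x | x y z _ [n1 H1] _ [n2 H2]].
  - exists n; apply rt_step; auto.
  - exists 0; apply rt_refl.
  - exists (max n1 n2).
    apply rt_trans with y;
      [apply approx_rt_mono with n1 | apply approx_rt_mono with n2]; auto; lia.
Qed.

Lemma Forall_rews_approx (sigma : V -> term F V) cs :
  Forall (fun c => rews R (subst sigma (fst c)) (subst sigma (snd c))) cs ->
  exists n, Forall (fun c => clos_refl_trans _ (approx R n)
                               (subst sigma (fst c)) (subst sigma (snd c))) cs.
Proof.
  induction 1 as [|c cs Hc _ [n Hn]]; [exists 0; constructor|].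
  destruct (rews_approx Hc) as [m Hm]. exists (max n m). constructor.
  - apply approx_rt_mono with m; auto; lia.
  - revert Hn; apply Forall_impl; intros; apply approx_rt_mono with n; auto; lia.
Qed.

End Approximations.

Section Forward.
Variables F V : Type.
Variable R : rule F V -> Prop.
Hypothesis Hcc : CCTRS R.

Lemma label_redex rho (sigma : V -> term F V) f ls : R rho -> lhs rho = Fun f ls ->
  label R (subst sigma (lhs rho)) =
  Fun (LDef f (restrict R f))
      (map (fun l => subst (fun x => label R (sigma x)) (label R l)) ls).
Proof.
  intros HR Hl. rewrite Hl. simpl. rewrite label_sym_defined.
  - f_equal. rewrite map_map. apply map_ext. intros; apply label_subst.
  - exists rho. rewrite Hl. auto.
Qed.

Lemma lstep_label_approx n : forall s t, approx R n s t -> lstep R (label R s) (label R t).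
Proof.
  induction n as [|n IH]; simpl; [tauto|].
  intros s t (C & rho & sigma & HR & -> & -> & Hc).
  destruct (Hcc HR) as (f & ls & Hl & _).
  rewrite !label_plug, (label_redex sigma HR Hl), label_subst.
  apply lstep_ii_rhs with (ls := ls); auto.
  - split; auto. rewrite Hl; reflexivity.
  - intros i a b Hi. apply nth_error_In in Hi. rewrite Forall_forall in Hc.
    rewrite <- !label_subst. exact (clos_rt_map _ (label R) IH (Hc _ Hi)).
Qed.

Lemma lstep_label_rew s t : rew R s t -> lstep R (label R s) (label R t).
Proof. intros [n H]. eapply lstep_label_approx; eauto. Qed.

Lemma lsteps_label_rews s t : rews R s t -> lsteps R (label R s) (label R t).
Proof. apply clos_rt_map, lstep_label_rew. Qed.

Lemma lstep_sub_label_sqsupset s t :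
  sqsupset R s t -> lstep_sub R (label R s) (label R t).
Proof.
  intros (C & rho & sigma & i & a & b & HR & -> & Hn & Hprev & ->).
  destruct (Hcc HR) as (f & ls & Hl & _).
  exists (label_ctx R C), f, (restrict R f), ls, rho, (fun x => label R (sigma x)), i, a, b.
  repeat split; auto.
  - rewrite Hl; reflexivity.
  - rewrite label_plug, (label_redex sigma HR Hl). reflexivity.
  - intros j a' b' Hj Hn'. rewrite <- !label_subst. apply lsteps_label_rews; eauto.
  - apply label_subst.
Qed.

Lemma linf_label_of_not_quasi_decreasing s :
  ~ quasi_decreasing R s -> linf R (label R s).
Proof.
  unfold quasi_decreasing. intros H. apply NNPP in H. destruct H as [u [H0 Hu]].
  exists (fun n => label R (u n)). split; [rewrite H0; auto|].
  intros n. destruct (Hu n);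
    [left; apply lstep_label_rew | right; apply lstep_sub_label_sqsupset]; auto.
Qed.

End Forward.

Section Backward.
Variables F V : Type.
Variable R : rule F V -> Prop.
Hypothesis Hcc : CCTRS R.

Definition sound_lsym (g : lsym F V) : Prop :=
  match g with LCon _ _ => True | LDef f L => forall r, L r -> restrict R f r end.

Definition sound (t : lterm F V) : Prop := all_syms sound_lsym t.

Lemma sound_label t : sound (label R t).
Proof.
  induction t as [x|f ts IH] using term_nested_ind; [exact I|].
  change (all_syms sound_lsym (Fun (label_sym R f) (map (label R) ts))).
  rewrite all_syms_Fun, Forall_map. split; auto.
  unfold label_sym. destruct excluded_middle_informative; simpl; auto.
Qed.

Lemma sound_subst_label (sigma : V -> lterm F V) t :
  sound (subst sigma (label R t)) <-> (forall x, In x (vars t) -> sound (sigma x)).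
Proof.
  unfold sound. rewrite all_syms_subst, vars_label.
  split; [tauto | split; auto; apply sound_label].
Qed.

Lemma sound_redex C f L ls rho (sigma : V -> lterm F V) :
  lhs rho = Fun f ls -> L rho ->
  sound (plug C (Fun (LDef f L) (map (fun l => subst sigma (label R l)) ls))) ->
  R rho /\ (forall x, In x (vars (lhs rho)) -> sound (sigma x)).
Proof.
  intros Hl HL H. apply all_syms_plug_inv, all_syms_Fun in H as [Hf Hls].
  split; [apply Hf; auto|].
  rewrite Hl. simpl. intros x Hx. apply in_flat_map in Hx as [l [Hl' Hx]].
  rewrite Forall_map, Forall_forall in Hls.
  exact (proj1 (sound_subst_label sigma l) (Hls _ Hl') x Hx).
Qed.

(* In a CCTRS the variables of a_i occur in the left-hand side or in some
   earlier b_j, so soundness propagates along the conditions. *)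
Lemma sound_cond_lhs rho (sigma : V -> lterm F V) k : R rho ->
  (forall x, In x (vars (lhs rho)) -> sound (sigma x)) ->
  (forall i a b, i < k -> nth_error (conds rho) i = Some (a, b) ->
     sound (subst sigma (label R a)) -> sound (subst sigma (label R b))) ->
  forall i a b, i <= k -> nth_error (conds rho) i = Some (a, b) ->
     sound (subst sigma (label R a)).
Proof.
  intros HR Hl Hb i. induction i as [i IH] using (well_founded_induction lt_wf).
  intros a b Hik Hn. apply sound_subst_label. intros x Hx.
  destruct (Hcc HR) as (f & ls & _ & _ & _ & _ & _ & _ & Hva).
  specialize (Hva _ _ _ Hn x Hx). apply in_app_or in Hva as [Hva|Hva]; auto.
  apply in_flat_map in Hva as [[a' b'] [Hc Hx']].
  apply In_firstn_nth_error in Hc as [j [Hj Hnj]].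
  assert (Hb' : sound (subst sigma (label R b'))).
  { apply (Hb j a'); auto; [lia|]. apply (IH j Hj a' b'); auto; lia. }
  exact (proj1 (sound_subst_label sigma b') Hb' x Hx').
Qed.

Variable rules_of : F -> list (rule F V).
Hypothesis rules_of_complete : forall f rho, restrict R f rho -> In rho (rules_of f).

Definition lsym_weight (g : lsym F V) : nat :=
  match g with LCon _ _ => 0 | LDef f L => count_holds L (rules_of f) end.

Fixpoint weight (t : lterm F V) : nat :=
  match t with Var _ => 0 | Fun g ts => lsym_weight g + list_sum (map weight ts) end.

Lemma weight_plug_lt C t t' : weight t' < weight t -> weight (plug C t') < weight (plug C t).
Proof.
  intros H; induction C; simpl; auto.
  rewrite !map_app, !list_sum_app. simpl. lia.
Qed.

Definition simulated (s t : lterm F V) : Prop :=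
  sound s -> sound t /\
    ((erase s = erase t /\ weight t < weight s) \/ rew R (erase s) (erase t)).

Lemma lstep_nested_ind (P : lterm F V -> lterm F V -> Prop)
  (Hremove : forall C f L ss rho, L rho ->
     P (plug C (Fun (LDef f L) ss)) (plug C (Fun (LDef f (remove_rule L rho)) ss)))
  (Hrhs : forall C f L ls rho (sigma : V -> lterm F V), lhs rho = Fun f ls -> L rho ->
     (forall i a b, nth_error (conds rho) i = Some (a, b) ->
        clos_refl_trans _ (fun x y => lstep R x y /\ P x y)
          (subst sigma (label R a)) (subst sigma (label R b))) ->
     P (plug C (Fun (LDef f L) (map (fun l => subst sigma (label R l)) ls)))
       (plug C (subst sigma (label R (rhs rho))))) :
  forall s t, lstep R s t -> P s t.
Proof.
  fix IH 3. intros s t [C f L ss rho us sigma HL _ _ _ _ _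
                     | C f L ls rho sigma Hl HL Hc
                     | C f L ls rho sigma j aj bj u tau _ HL _ _ _ _ _ _ _].
  - apply Hremove; auto.
  - apply Hrhs; auto. intros i a b Hn.
    induction (Hc i a b Hn) as [x y Hxy | x | x y z _ IH1 _ IH2].
    + apply rt_step. split; [exact Hxy | exact (IH _ _ Hxy)].
    + apply rt_refl.
    + exact (rt_trans _ _ _ _ _ IH1 IH2).
  - apply Hremove; auto.
Qed.

Lemma remove_rule_simulated C f L ss rho : L rho ->
  simulated (plug C (Fun (LDef f L) ss)) (plug C (Fun (LDef f (remove_rule L rho)) ss)).
Proof.
  intros HL Hs. pose proof (all_syms_plug_inv _ _ _ Hs) as Hf.
  apply all_syms_Fun in Hf as [Hf _]. simpl in Hf.
  split; [|left; split].
  - revert Hs. apply all_syms_plug_replace. rewrite !all_syms_Fun.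
    intros [_ Hss]. split; auto. intros r [Hr _]. auto.
  - rewrite !erase_plug. reflexivity.
  - apply weight_plug_lt. simpl.
    enough (count_holds (remove_rule L rho) (rules_of f) < count_holds L (rules_of f))
      by lia.
    apply count_holds_strict_mono with rho; auto.
    + intros r [Hr _]; auto.
    + intros [_ Hne]; auto.
Qed.

Lemma lsteps_simulated_sound s t :
  clos_refl_trans _ (fun x y => lstep R x y /\ simulated x y) s t ->
  sound s -> sound t /\ rews R (erase s) (erase t).
Proof.
  induction 1 as [x y [_ H]| x | x y z _ IH1 _ IH2]; intros Hs.
  - destruct (H Hs) as [Ht [[-> _]|Hr]]; split; auto; [apply rt_refl|apply rt_step; auto].
  - split; auto; apply rt_refl.
  - destruct (IH1 Hs) as [Hy H1]. destruct (IH2 Hy) as [Hz H2]. split; auto.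
    eapply rt_trans; eauto.
Qed.

Lemma rhs_simulated C f L ls rho (sigma : V -> lterm F V) :
  lhs rho = Fun f ls -> L rho ->
  (forall i a b, nth_error (conds rho) i = Some (a, b) ->
     sound (subst sigma (label R a)) ->
     sound (subst sigma (label R b)) /\
     rews R (subst (fun x => erase (sigma x)) a) (subst (fun x => erase (sigma x)) b)) ->
  simulated (plug C (Fun (LDef f L) (map (fun l => subst sigma (label R l)) ls)))
            (plug C (subst sigma (label R (rhs rho)))).
Proof.
  intros Hl HL Hc Hs.
  destruct (@sound_redex C f L ls rho sigma Hl HL Hs) as [HR Hlhs].
  assert (Hcond : forall i a b, nth_error (conds rho) i = Some (a, b) ->
                   sound (subst sigma (label R a))).
  { intros i a b Hn. apply (@sound_cond_lhs rho sigma (length (conds rho)) HR Hlhs) with i b; auto.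
    - intros j a' b' _ Hn'. apply (Hc j a' b' Hn').
    - apply Nat.lt_le_incl, nth_error_Some. rewrite Hn; discriminate. }
  split.
  - revert Hs; apply all_syms_plug_replace; intros _.
    apply sound_subst_label. intros x Hx.
    destruct (Hcc HR) as (f' & ls' & _ & _ & _ & _ & _ & Hvr & _).
    apply Hvr, in_app_or in Hx as [Hx|Hx]; auto.
    apply in_flat_map in Hx as [[a b] [Hin Hx]].
    apply In_nth_error in Hin as [i Hn].
    destruct (Hc i a b Hn (Hcond i a b Hn)) as [Hb _].
    exact (proj1 (sound_subst_label sigma b) Hb x Hx).
  - right. rewrite !erase_plug, erase_subst_label, erase_redex, <- Hl.
    destruct (@Forall_rews_approx _ _ R (fun x => erase (sigma x)) (conds rho))
      as [n Hn].
    { apply Forall_forall. intros [a b] Hin. apply In_nth_error in Hin as [i Hi].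
      exact (proj2 (Hc i a b Hi (Hcond i a b Hi))). }
    exists (S n). simpl. exists (erase_ctx C), rho, (fun x => erase (sigma x)). auto.
Qed.

Lemma lstep_simulated s t : lstep R s t -> simulated s t.
Proof.
  apply lstep_nested_ind; [apply remove_rule_simulated|].
  intros C f L ls rho sigma Hl HL Hc. apply rhs_simulated; auto.
  intros i a b Hn Ha. rewrite <- !(erase_subst_label R).
  exact (lsteps_simulated_sound (Hc i a b Hn) Ha).
Qed.

Lemma lsteps_sound_rews s t :
  lsteps R s t -> sound s -> sound t /\ rews R (erase s) (erase t).
Proof.
  intros H. apply lsteps_simulated_sound.
  revert H. apply (clos_rt_map _ (fun x => x)). split; auto using lstep_simulated.
Qed.

Lemma lstep_sub_sqsupset s t :
  lstep_sub R s t -> sound s -> sound t /\ sqsupset R (erase s) (erase t).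
Proof.
  intros (C & f & L & ls & rho & sigma & j & aj & bj & Hl & HL & -> & Hn & Hprev & ->) Hs.
  destruct (@sound_redex C f L ls rho sigma Hl HL Hs) as [HR Hlhs].
  assert (Hcond : forall i a b, i <= j -> nth_error (conds rho) i = Some (a, b) ->
                   sound (subst sigma (label R a))).
  { apply (@sound_cond_lhs rho sigma j HR Hlhs).
    intros i a b Hi Hn' Ha. exact (proj1 (lsteps_sound_rews (Hprev i a b Hi Hn') Ha)). }
  split; [apply (Hcond j aj bj); auto|].
  exists (erase_ctx C), rho, (fun x => erase (sigma x)), j, aj, bj.
  repeat split; auto.
  - rewrite erase_plug, erase_redex, Hl. reflexivity.
  - intros i a b Hi Hn'. rewrite <- !(erase_subst_label R).
    apply (lsteps_sound_rews (Hprev i a b Hi Hn')). apply (Hcond i a b); auto; lia.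
  - apply erase_subst_label.
Qed.

Lemma not_quasi_decreasing_of_linf_label s :
  linf R (label R s) -> ~ quasi_decreasing R s.
Proof.
  intros [u [H0 Hu]] Hqd. apply Hqd.
  assert (Hsound : forall n, sound (u n)).
  { induction n; [rewrite H0; apply sound_label|].
    destruct (Hu n) as [H|H]; [apply (lstep_simulated H IHn)|apply (lstep_sub_sqsupset H IHn)]. }
  destruct (@stuttering_chain _ _ (fun x y => rew R x y \/ sqsupset R x y) (@erase F V)
              weight u) as [w [Hw0 Hw]].
  - intros n. destruct (Hu n) as [H|H].
    + destruct (lstep_simulated H (Hsound n)) as [_ [[He Hlt]|Hr]]; auto.
    + left; right. apply (lstep_sub_sqsupset H (Hsound n)).
  - exists w. rewrite Hw0, H0, erase_label. auto.
Qed.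

End Backward.

Theorem lemma4 (F V : Type) (ar : F -> nat) (R : rule F V -> Prop)
  (HV : forall l : list V, exists x : V, ~ In x l)
  (Hwf : trs_wf R ar) (Hsf : semi_finite R) (Hcc : CCTRS R)
  (s : term F V) (Hs : wf ar s) :
  ~ quasi_decreasing R s <-> linf R (label R s).
Proof.
  split; [apply linf_label_of_not_quasi_decreasing; auto|].
  destruct (choice _ Hsf) as [rules_of Hrules_of].
  apply (not_quasi_decreasing_of_linf_label Hcc rules_of).
  intros f rho; apply Hrules_of.
Qed.
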